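(* Let $S$ be a semigroup and $T$ a finitely generated weakly pseudo-right-unitary subsemigroup of $S$. Let $\sigma : X^+ \to T$ and $\tau : Y^+ \to S$ be choices of generators such that $X \subseteq Y$ and $\sigma$ is the restriction of $\tau$ to $X^+$. Then $L_\sigma(T) = L_\tau(S) \cap \hat{X}^*$.
   Context: For a semigroup $S$, $S^1$ denotes the monoid obtained by adjoining a new identity $1$ (even if $S$ already has one). A choice of generators for $S$ is a surjective morphism $\sigma : X^+ \to S$ from a free semigroup; it extends uniquely to $\sigma^1 : X^* \to S^1$. Let $\overline{X} = \{\overline{x} : x \in X\}$ be a set of formal inverses, $\hat{X} = X \cup \overline{X}$ (and $\hat Y$ similarly, so $\hat X \subseteq \hat Y$). The loop automaton of $S$ with respect to $\sigma$ is the directed labelled graph with vertex set $S^1$, having for each $a \in S^1$ and $x \in X$ an edge from $a$ to $a(x\sigma)$ labelled $x$ and an edge from $a(x\sigma)$ to $a$ labelled $\overline{x}$. The loop problem $L_\sigma(S) \subseteq \hat{X}^*$ is the set of words labelling paths from $1$ to $1$ in this graph (including the empty word). A subsemigroup $T$ of $S$ is weakly pseudo-right-unitary if for every $a \in S$ and every pair $x, y \in T$ with $ax \in T$, there exists $b \in T$ with $ax = bx$ and $ay = by$. *)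

From mathcomp Require Import all_boot.
Set Implicit Arguments. Unset Strict Implicit. Unset Printing Implicit Defensive.

(* A semigroup is given by a carrier type S and a binary operation mul,
   assumed associative where needed. *)

(* Multiplication in S^1 = option S (None is the adjoined identity 1) on the
   left by an element of S^1 and on the right by an element of S. *)
Definition mul1 (S : Type) (mul : S -> S -> S) (a : option S) (s : S) : S :=
  match a with None => s | Some a' => mul a' s end.

(* Value of a nonempty word x0 x1 ... xn under the morphism X^+ -> S induced by g. *)
Definition eval_ne (S A : Type) (mul : S -> S -> S) (g : A -> S) (x0 : A) (w : seq A) : S :=
  foldl (fun s y => mul s (g y)) (g x0) w.

Definition generates (S A : Type) (mul : S -> S -> S) (g : A -> S) : Prop :=
  forall s : S, exists (x0 : A) (w : seq A), s = eval_ne mul g x0 w.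

(* Letters of hat A: inl x is x, inr x is the formal inverse bar x. *)
Definition hat (A : Type) := (A + A)%type.

Definition loop_step (S A : Type) (mul : S -> S -> S) (g : A -> S)
    (a : option S) (l : hat A) (b : option S) : Prop :=
  match l with
  | inl x => b = Some (mul1 mul a (g x))
  | inr x => a = Some (mul1 mul b (g x))
  end.

Fixpoint loop_path (S A : Type) (mul : S -> S -> S) (g : A -> S)
    (a : option S) (w : seq (hat A)) (b : option S) : Prop :=
  match w with
  | [::] => a = b
  | l :: w' => exists c, loop_step mul g a l c /\ loop_path mul g c w' b
  end.

Definition loop_problem (S A : Type) (mul : S -> S -> S) (g : A -> S)
    (w : seq (hat A)) : Prop :=
  loop_path mul g None w None.

Definition sub_mul (S : Type) (mul : S -> S -> S) (T : S -> Prop)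
    (clT : forall a b, T a -> T b -> T (mul a b)) : sig T -> sig T -> sig T :=
  fun a b => exist T (mul (proj1_sig a) (proj1_sig b))
                     (clT _ _ (proj2_sig a) (proj2_sig b)).

Definition weakly_pru (S : Type) (mul : S -> S -> S) (T : S -> Prop) : Prop :=
  forall a x y : S, T x -> T y -> T (mul a x) ->
    exists b, T b /\ mul a x = mul b x /\ mul a y = mul b y.

Definition hat_map (X Y : Type) (i : X -> Y) (l : hat X) : hat Y :=
  match l with inl x => inl (i x) | inr x => inr (i x) end.

(* A path in the automaton of T maps to a path in the automaton of S because
   the inclusion is a morphism. The converse is an induction on the word with
   the invariant: if a path labelled by a word over X goes from c to 1 in
   S^1, and c u lies in T^1 for some u in T^1, then some b in T^1 with
   b u = c u starts a path with the same label in the automaton of T.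
   An inverse edge only enlarges u (c = c' x gives c u = c' (x u)). For a
   forward edge out of c, weak pseudo-right-unitarity replaces c by some b
   in T^1 that agrees with c on u and on the generator x. *)

From mathcomp Require Import all_boot.
From Stdlib Require Import Classical_Prop ProofIrrelevance.

Set Implicit Arguments.
Unset Strict Implicit.
Unset Printing Implicit Defensive.

Section MonoidS1.

Variables (S : Type) (mul : S -> S -> S).

Definition omul (a b : option S) : option S :=
  match b with None => a | Some b' => Some (mul1 mul a b') end.

Hypothesis mulA : forall a b c : S, mul a (mul b c) = mul (mul a b) c.

Lemma mul1A (a : option S) (s t : S) :
  mul (mul1 mul a s) t = mul1 mul a (mul s t).
Proof. by case: a => //= a; rewrite mulA. Qed.

Lemma omulA (a b c : option S) : omul (omul a b) c = omul a (omul b c).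
Proof. by case: c => [c|] //; case: b => [b|] //=; rewrite mul1A. Qed.

End MonoidS1.

Section LoopPathMorphism.

Variables (S S' : Type) (mul : S -> S -> S) (mul' : S' -> S' -> S').
Variables (f : S -> S') (fM : forall a b, f (mul a b) = mul' (f a) (f b)).
Variables (X Y : Type) (i : X -> Y) (g : X -> S) (g' : Y -> S').
Hypothesis g'_i : forall x, g' (i x) = f (g x).

Lemma mul1_map (a : option S) (s : S) :
  f (mul1 mul a s) = mul1 mul' (omap f a) (f s).
Proof. by case: a => //= a; rewrite fM. Qed.

Lemma loop_path_map (a b : option S) (w : seq (hat X)) :
  loop_path mul g a w b ->
  loop_path mul' g' (omap f a) (map (hat_map i) w) (omap f b).
Proof.
elim: w a => [|l w IHw] a /=; first by move->.
case=> c [step path_c]; exists (omap f c); split; last exact: IHw.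
by case: l step => x /= ->; rewrite /= mul1_map g'_i.
Qed.

End LoopPathMorphism.

Section LiftLoopPaths.

Variables (S : Type) (mul : S -> S -> S).
Hypothesis mulA : forall a b c : S, mul a (mul b c) = mul (mul a b) c.
Variables (T : S -> Prop) (clT : forall a b : S, T a -> T b -> T (mul a b)).
Hypothesis wpru : weakly_pru mul T.

Definition T1 (a : option S) : Prop :=
  match a with None => True | Some s => T s end.

Definition incl : option (sig T) -> option S := omap (@proj1_sig S T).

Lemma incl_inj : injective incl.
Proof.
case=> [a|] [b|] //= [eq_ab]; congr Some.
by apply: eq_sig_hprop eq_ab => x; apply: proof_irrelevance.
Qed.

Lemma T1_incl (b : option (sig T)) : T1 (incl b).
Proof. by case: b => [[]|]. Qed.

Lemma T1_omul (a b : option S) : T1 a -> T1 b -> T1 (omul mul a b).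
Proof. by case: b => [b|] //; case: a => [a|] //= Ta Tb; apply: clT. Qed.

Lemma mul1_incl (b : option (sig T)) (t : sig T) :
  mul1 mul (incl b) (proj1_sig t) = proj1_sig (mul1 (sub_mul clT) b t).
Proof. by case: b. Qed.

Lemma weakly_pru1 (c u : option S) (y : S) :
  T1 u -> T y -> T1 (omul mul c u) ->
  exists b : option (sig T),
    omul mul (incl b) u = omul mul c u /\ mul1 mul (incl b) y = mul1 mul c y.
Proof.
move=> Tu Ty Tcu; case: c Tcu => [c|] Tcu; last by exists None.
have [Tc | nTc] := classic (T c); first by exists (Some (exist T c Tc)).
case: u Tu Tcu => [u|] //= Tu Tcu.
have [b [Tb [bu_cu by_cy]]] := wpru Tu Ty Tcu.
by exists (Some (exist T b Tb)); rewrite /= bu_cu by_cy.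
Qed.

Variables (X Y : Type) (i : X -> Y) (sigma : X -> sig T) (tau : Y -> S).
Hypothesis restr : forall x : X, tau (i x) = proj1_sig (sigma x).

Lemma loop_path_lift (w : seq (hat X)) (c u : option S) :
  T1 u -> T1 (omul mul c u) ->
  loop_path mul tau c (map (hat_map i) w) None ->
  exists b : option (sig T),
    omul mul (incl b) u = omul mul c u /\
    loop_path (sub_mul clT) sigma b w None.
Proof.
elim: w c u => [|l w IHw] c u Tu Tcu /=; first by move->; exists None.
case=> c' [step path_c']; case: l step => x /= step.
- have [b [bu_cu bx_cx]] := weakly_pru1 Tu (proj2_sig (sigma x)) Tcu.
  have c'_bx : c' = incl (Some (mul1 (sub_mul clT) b (sigma x))).
    by rewrite step restr -bx_cx /= mul1_incl.
  have Tc' : T1 c' by rewrite c'_bx; apply: T1_incl.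
  have [b' [b'_c' path_b']] := IHw c' None I Tc' path_c'.
  have b'_bx : b' = Some (mul1 (sub_mul clT) b (sigma x)).
    by apply: incl_inj; rewrite -c'_bx.
  by exists b; split; last by exists b'.
- pose u' := omul mul (Some (tau (i x))) u.
  have c'u'_cu : omul mul c' u' = omul mul c u.
    by rewrite -omulA // step.
  have Tu' : T1 u' by apply: T1_omul; rewrite //= restr; apply: proj2_sig.
  have Tc'u' : T1 (omul mul c' u') by rewrite c'u'_cu.
  have [b' [b'u'_c'u' path_b']] := IHw c' u' Tu' Tc'u' path_c'.
  exists (Some (mul1 (sub_mul clT) b' (sigma x))); split; last by exists b'.
  by rewrite -c'u'_cu -b'u'_c'u' -omulA //= restr mul1_incl.
Qed.

End LiftLoopPaths.

Theorem proposition3p2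
  (S : Type) (mul : S -> S -> S)
  (mulA : forall a b c : S, mul a (mul b c) = mul (mul a b) c)
  (T : S -> Prop) (clT : forall a b : S, T a -> T b -> T (mul a b))
  (wpru : weakly_pru mul T)
  (X : finType) (Y : Type) (i : X -> Y) (i_inj : injective i)
  (sigma : X -> sig T) (tau : Y -> S)
  (sigma_gen : generates (sub_mul clT) sigma)
  (tau_gen : generates mul tau)
  (restr : forall x : X, tau (i x) = proj1_sig (sigma x)) :
  forall w : seq (hat X),
    loop_problem (sub_mul clT) sigma w <->
    loop_problem mul tau (map (hat_map i) w).
Proof.
move=> w; split.
- exact: (loop_path_map (f := @proj1_sig S T) _ restr).
- move=> /(loop_path_lift mulA clT wpru restr) lift.
  have [b [b_1 path_b]] := lift None I I.
  have b_None : b = None by apply: incl_inj; exact: b_1.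
  by rewrite b_None in path_b.
Qed.
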